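(* Let $n\in\mathbb{Z}$ and let $\{a_i\}_{i\in\mathbb{Z}}$ be any strictly increasing sequence of integers. Then $$\sum_{i=-\infty}^{\infty}\left(\frac{1}{2|n-a_i|+1}-\frac{1}{2\big(|n-a_i|+(a_i-a_{i-1})\big)+1}\right)\le\frac43.$$ If furthermore $a_i-a_{i-1}\ge 2$ for all $i\in\mathbb{Z}$, then the same sum is at most $1+\frac15+\frac17-\frac19$. *)

From HB Require Import structures.
From mathcomp Require Import all_boot all_order all_algebra.
From mathcomp Require Import all_classical all_reals.
From mathcomp Require Import ereal esum.
Set Implicit Arguments. Unset Strict Implicit. Unset Printing Implicit Defensive.
Import Order.TTheory GRing.Theory Num.Theory.
Local Open Scope ring_scope.

Definition lemma2_term (R : realType) (n : int) (a : int -> int) (i : int) : R :=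
  1 / (2 * (`|n - a i|)%:~R + 1)
  - 1 / (2 * ((`|n - a i|) + (a i - a (i - 1)))%:~R + 1).

From HB Require Import structures.
From mathcomp Require Import all_boot all_order all_algebra.
From mathcomp Require Import all_classical all_reals.
From mathcomp Require Import ereal esum.
From mathcomp Require Import ring lra zify.
Import Order.TTheory GRing.Theory Num.Theory.
Local Open Scope classical_set_scope.
Local Open Scope ring_scope.

(* Write f(z) = 1/(2z+1), so the i-th term is f(d_i) - f(d_i + g_i) with
   d_i = |n - a_i| and g_i = a_i - a_{i-1} >= c (c = 1, resp. 2).  The terms
   are nonnegative and are dominated by the increments of the potential
     Phi(i) = f(n - a_i)          if a_i < n,
     Phi(i) = K - f(a_i - n + c)  if a_i >= n,
   which takes values in [0, K]; hence every finite partial sum telescopes to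
   at most K.  Left of n the domination is an equality; right of n it holds
   because f is convex and decreasing, so moving an interval of fixed length
   towards 0 increases the drop of f across it.  The single index where the
   sequence crosses n needs a numerical check, and this is what fixes K. *)

Section OddReciprocal.
Variable R : realType.

Definition recip_odd (z : int) : R := 1 / (2 * z%:~R + 1).

Lemma recip_odd_ge0 z : 0 <= z -> 0 <= recip_odd z.
Proof.
rewrite /recip_odd -(ler0z R) => hz.
by apply: divr_ge0; lra.
Qed.

Lemma recip_odd_le z w : 0 <= z -> z <= w -> recip_odd w <= recip_odd z.
Proof.
rewrite /recip_odd -(ler0z R) -(ler_int R) => hz hzw.
by rewrite !div1r lef_pV2 ?posrE; lra.
Qed.

Lemma recip_odd0 : recip_odd 0 = 1.
Proof. by rewrite /recip_odd; field. Qed.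

Lemma recip_odd_le1 z : 0 <= z -> recip_odd z <= 1.
Proof. by move=> hz; rewrite -recip_odd0 recip_odd_le. Qed.

Lemma recip_odd1 : recip_odd 1 = 1 / 3.
Proof. by rewrite /recip_odd; field. Qed.

Lemma recip_odd2 : recip_odd 2 = 1 / 5.
Proof. by rewrite /recip_odd; field. Qed.

Lemma recip_odd3 : recip_odd 3 = 1 / 7.
Proof. by rewrite /recip_odd; field. Qed.

Lemma recip_odd_shift_drop (x y l : int) : 0 <= x -> x <= y -> 0 <= l ->
  recip_odd y - recip_odd (y + l) <= recip_odd x - recip_odd (x + l).
Proof.
rewrite /recip_odd !intrD -(ler0z R) -(ler_int R) -[0 <= l](ler0z R).
move: (x%:~R) (y%:~R) (l%:~R) => X Y L hX hXY hL.
have drop u : 0 <= u ->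
    1 / (2 * u + 1) - 1 / (2 * (u + L) + 1)
    = (2 * L) * ((2 * u + 1) * (2 * (u + L) + 1))^-1.
  by move=> hu; field; apply/andP; split; rewrite gt_eqF //; lra.
rewrite !drop //; last lra.
by apply: ler_wpM2l; [lra | rewrite lef_pV2 ?posrE; nra].
Qed.

Lemma recip_odd_crossing1 (x y : int) : 0 <= x -> 1 <= y ->
  recip_odd x - recip_odd (x + (x + y)) <= 4 / 3 - recip_odd (x + 1) - recip_odd y.
Proof.
move=> hx hy; have [->|hx1] : x = 0 \/ 1 <= x by lia.
  by rewrite !add0r recip_odd0 recip_odd1; lra.
have := recip_odd_le 1 x ltac:(lia) hx1.
have := recip_odd_le 1 y ltac:(lia) hy.
have := recip_odd_le 1 (x + 1) ltac:(lia) ltac:(lia).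
have := recip_odd_ge0 (x + (x + y)) ltac:(lia).
by rewrite recip_odd1; lra.
Qed.

Lemma recip_odd_crossing2 (x y : int) : 0 <= x -> 1 <= y ->
  recip_odd x - recip_odd (x + (x + y))
  <= (1 + 1 / 5 + 1 / 7 - 1 / 9) - recip_odd (x + 2) - recip_odd y.
Proof.
move=> hx hy; have [->|hx1] : x = 0 \/ 1 <= x by lia.
  by rewrite !add0r recip_odd0 recip_odd2; lra.
have := recip_odd_le 1 x ltac:(lia) hx1.
have := recip_odd_le 1 y ltac:(lia) hy.
have := recip_odd_le 3 (x + 2) ltac:(lia) ltac:(lia).
have := recip_odd_ge0 (x + (x + y)) ltac:(lia).
by rewrite recip_odd1 recip_odd3; lra.
Qed.

End OddReciprocal.

Section Telescoping.
Variable R : realType.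

Lemma ler_sum_uniq_subset {I : eqType} {s r : seq I} {F : I -> R} :
  (forall i, 0 <= F i) -> uniq s -> uniq r -> {subset s <= r} ->
  \sum_(i <- s) F i <= \sum_(i <- r) F i.
Proof.
move=> F0 us ur sr; rewrite [X in _ <= X](bigID (mem s)) /=.
have -> : \sum_(i <- r | i \in s) F i = \sum_(i <- s) F i.
  rewrite -big_filter; apply: perm_big; apply: uniq_perm; rewrite ?filter_uniq //.
  by move=> i; rewrite mem_filter andb_idr //; apply: sr.
by rewrite lerDl sumr_ge0.
Qed.

Lemma seq_int_sub_window (s : seq int) :
  exists N : nat, {subset s <= [seq - N%:Z + k%:Z | k <- iota 0 (2 * N).+1]}.
Proof.
exists (\sum_(i <- s) `|i|)%N => x xs.
have hx : (`|x| <= \sum_(i <- s) `|i|)%N.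
  by rewrite (big_rem x xs) /= leq_addr.
apply/mapP; exists (absz (x + (\sum_(i <- s) `|i|)%N)); last lia.
by rewrite mem_iota; lia.
Qed.

Variables (t Phi : int -> R) (K : R).
Hypothesis t_ge0 : forall i, 0 <= t i.
Hypothesis t_le_dPhi : forall i, t i <= Phi i - Phi (i - 1).
Hypothesis Phi_bounded : forall i, 0 <= Phi i <= K.

Lemma sum_window_le_dPhi (M : int) (L : nat) :
  \sum_(0 <= k < L) t (M + k%:Z) <= Phi (M + L%:Z - 1) - Phi (M - 1).
Proof.
elim: L => [|L IH]; first by rewrite big_geq // addr0 subrr.
rewrite big_nat_recr //=.
have -> : M + L.+1%:Z - 1 = M + L%:Z by lia.
by have := t_le_dPhi (M + L%:Z); lra.
Qed.

Lemma sum_uniq_le_potential_bound (s : seq int) : uniq s -> \sum_(i <- s) t i <= K.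
Proof.
move=> us; have [N sN] := seq_int_sub_window s.
have uW : uniq [seq - N%:Z + k%:Z | k <- iota 0 (2 * N).+1].
  by rewrite map_inj_uniq ?iota_uniq // => k1 k2 /addrI [].
apply: le_trans (ler_sum_uniq_subset t_ge0 us uW sN) _.
rewrite big_map -/(index_iota 0 _).
have := sum_window_le_dPhi (- N%:Z) (2 * N).+1.
by have := Phi_bounded (- N%:Z - 1); have := Phi_bounded (- N%:Z + (2 * N).+1%:Z - 1); lra.
Qed.

End Telescoping.

Section Potential.
Variables (R : realType) (n : int) (a : int -> int) (c : int) (K : R).
Hypothesis gap_ge : forall i, c <= a i - a (i - 1).
Hypothesis c_ge1 : 1 <= c.
Hypothesis crossing : forall x y : int, 0 <= x -> 1 <= y -> c <= x + y ->
  recip_odd R x - recip_odd R (x + (x + y))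
  <= K - recip_odd R (x + c) - recip_odd R y.

Definition potential (i : int) : R :=
  if a i < n then recip_odd R (n - a i) else K - recip_odd R (a i - n + c).

Lemma lemma2_termE i : lemma2_term R n a i =
  recip_odd R `|n - a i| - recip_odd R (`|n - a i| + (a i - a (i - 1))).
Proof. by []. Qed.

Lemma lemma2_term_ge0 i : 0 <= lemma2_term R n a i.
Proof.
rewrite lemma2_termE subr_ge0; apply: recip_odd_le => //.
by have := gap_ge i; lia.
Qed.

Lemma potential_bounded i : 0 <= potential i <= K.
Proof.
have K_ge1 : 1 <= K.
  have := crossing 0 c (lexx 0) c_ge1 ltac:(lia).
  have := recip_odd_ge0 R c ltac:(lia).
  by rewrite recip_odd0 !add0r; lra.
rewrite /potential; case: ifP => hi;
  [have hz : 0 <= n - a i by lia | have hz : 0 <= a i - n + c by lia];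
  have := recip_odd_le1 R _ hz; have := recip_odd_ge0 R _ hz;
  by move=> h0 h1; apply/andP; split; lra.
Qed.

Lemma lemma2_term_le_dpotential i :
  lemma2_term R n a i <= potential i - potential (i - 1).
Proof.
have hgap := gap_ge i.
rewrite lemma2_termE /potential.
case: (ltP (a i) n) => hi.
  have hi1 : a (i - 1) < n by lia.
  rewrite hi1 ger0_norm; last lia.
  by rewrite (_ : n - a i + _ = n - a (i - 1)); last lia.
rewrite distrC ger0_norm; last lia.
case: (ltP (a (i - 1)) n) => hi1.
  have := crossing (a i - n) (n - a (i - 1)) ltac:(lia) ltac:(lia) ltac:(lia).
  by rewrite (_ : a i - n + (a i - n + _) = a i - n + (a i - a (i - 1))); [lra | lia].
have := recip_odd_shift_drop R (a (i - 1) - n + c) (a i - n) (a i - a (i - 1))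
  ltac:(lia) ltac:(lia) ltac:(lia).
by rewrite (_ : a (i - 1) - n + c + _ = a i - n + c); [lra | lia].
Qed.

Lemma esum_lemma2_term_le :
  (\esum_(i in [set: int]) (lemma2_term R n a i)%:E <= K%:E)%E.
Proof.
apply: ge_ereal_sup => _ [A [finA _] <-].
rewrite fsbig_finite //= sumEFin lee_fin.
apply: (sum_uniq_le_potential_bound _ _ _ _ lemma2_term_ge0
  lemma2_term_le_dpotential potential_bounded).
exact: finmap.fset_uniq.
Qed.

End Potential.

Theorem lemma2 (R : realType) (n : int) (a : int -> int)
  (ha : forall i j : int, i < j -> a i < a j) :
  (\esum_(i in [set: int]) (lemma2_term R n a i)%:E <= (4 / 3 : R)%:E)%E /\
  ((forall i : int, 2 <= a i - a (i - 1)) ->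
   (\esum_(i in [set: int]) (lemma2_term R n a i)%:E
      <= (1 + 1 / 5 + 1 / 7 - 1 / 9 : R)%:E)%E).
Proof.
split=> [|gap2].
- apply: (esum_lemma2_term_le _ _ _ 1) => [i | | x y hx hy _].
  + by have := ha (i - 1) i; lia.
  + exact: lexx.
  + exact: recip_odd_crossing1.
- apply: (esum_lemma2_term_le _ _ _ _ _ gap2) => [| x y hx hy _].
  + by [].
  + exact: recip_odd_crossing2.
Qed.
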